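(* Let $\theta:H\to H$ be an endomorphism. Then: (1) every $\theta$-maximal hyperideal of $H$ is an $n$-ary Endo-prime hyperideal associated with $\theta$; (2) if $E$ is a hyperideal of $H$ such that $rad(E)$ is a $\theta$-maximal hyperideal, then $E$ is an $n$-ary Endo-primary hyperideal associated with $\theta$.
   Context: Throughout, $(H,h,k)$ is a commutative Krasner $(m,n)$-hyperring with scalar identity $1_H$: $(H,h)$ is a canonical $m$-ary hypergroup (a commutative associative $m$-ary hyperoperation $h:H^m\to\mathcal P^*(H)$ with a unique zero $0$ such that $h(u,0^{(m-1)})=\{u\}$, unique inverses, reversibility), $k:H^n\to H$ is a commutative associative $n$-ary operation distributing over $h$ in each argument, $k(0,u_2^n)=0$, and $k(u,1_H^{(n-1)})=u$ for all $u$. Notation: $u_i^j$ denotes $u_i,\dots,u_j$ (empty if $j<i$); $u^{(t)}$ denotes $u$ repeated $t$ times; for $r=l(n-1)+1$, $k_{(l)}(u_1^r)=k(k(\cdots k(k(u_1^n),u_{n+1}^{2n-1})\cdots),u_{r-n+1}^{r})$. A hyperideal is a nonempty $I\subseteq H$ such that $(I,h)$ is an $m$-ary subhypergroup and $k(u_1^{i-1},I,u_{i+1}^n)\subseteq I$ for all $u_j\in H$. An endomorphism is a map $\theta$ with $\theta(h(u_1^m))=h(\theta(u_1),\dots,\theta(u_m))$, $\theta(k(u_1^n))=k(\theta(u_1),\dots,\theta(u_n))$, $\theta(1_H)=1_H$. $rad(E)$ is the set of $u$ with $k(u^{(r)},1_H^{(n-r)})\in E$ for some $r\le n$ or $k_{(l)}(u^{(r)})\in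 E$ for some $r=l(n-1)+1>n$ (equivalently the intersection of all $n$-ary prime hyperideals containing $E$). A proper hyperideal $M$ is $\theta$-maximal if for every hyperideal $E$ with $M\subseteq E$, either $\theta(E)\subseteq M$ or $E=H$. A proper hyperideal $E$ is an $n$-ary Endo-prime hyperideal associated with $\theta$ if for all $u_1,\dots,u_n\in H$, $k(u_1^n)\in E$ implies that for some $i$, $u_i\in E$ or $\theta\big(k(u_1^{i-1},1_H,u_{i+1}^n)\big)\in E$; it is an $n$-ary Endo-primary hyperideal associated with $\theta$ if $k(u_1^n)\in E$ implies that for some $i$, $u_i\in E$ or $\theta\big(k(u_1^{i-1},1_H,u_{i+1}^n)\big)\in rad(E)$. *)

From Stdlib Require Import List Arith Permutation.
Import ListNotations.
Set Implicit Arguments.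

Section Hyperring.
Variables (H : Type) (m n : nat).
(* h xs z  means  z \in h(xs)  (xs of length m) ; k xs is the n-ary product. *)
Variables (h : list H -> H -> Prop) (k : list H -> H) (zero one : H) (inv : H -> H).

Definition hset (As : list (H -> Prop)) (z : H) : Prop :=
  exists xs, Forall2 (fun A x => A x) As xs /\ h xs z.

Definition singl (x : H) : H -> Prop := fun y => y = x.

(* list xs with its i-th entry (0-based) replaced by y *)
Definition replace_at (i : nat) (y : H) (xs : list H) : list H :=
  firstn i xs ++ y :: skipn (S i) xs.

Definition remove_at (i : nat) (xs : list H) : list H :=
  firstn i xs ++ skipn (S i) xs.

(* h(x_1^{i}, h(x_{i+1}^{i+m}), x_{i+m+1}^{2m-1}) as a set *)
Definition h_assoc_at (i : nat) (xs : list H) : H -> Prop :=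
  hset (map singl (firstn i xs) ++ [h (firstn m (skipn i xs))]
        ++ map singl (skipn (i + m) xs)).

Definition k_assoc_at (i : nat) (xs : list H) : H :=
  k (firstn i xs ++ [k (firstn n (skipn i xs))] ++ skipn (i + n) xs).

Record KrasnerHyperring : Prop := {
  kh_m : 2 <= m;
  kh_n : 2 <= n;
  h_nonempty : forall xs, length xs = m -> exists z, h xs z;
  h_comm : forall xs ys z, length xs = m -> Permutation xs ys -> (h xs z <-> h ys z);
  h_assoc : forall xs i j z, length xs = 2 * m - 1 -> i < m -> j < m ->
              (h_assoc_at i xs z <-> h_assoc_at j xs z);
  h_zero : forall u z, h (u :: repeat zero (m - 1)) z <-> z = u;
  h_zero_unique : forall e, (forall u z, h (u :: repeat e (m - 1)) z <-> z = u) -> e = zero;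
  h_inv : forall u, h (u :: inv u :: repeat zero (m - 2)) zero;
  h_inv_unique : forall u v, h (u :: v :: repeat zero (m - 2)) zero -> v = inv u;
  h_rev : forall xs z i, length xs = m -> h xs z -> i < m ->
            h (z :: map inv (remove_at i xs)) (nth i xs zero);
  k_comm : forall xs ys, length xs = n -> Permutation xs ys -> k xs = k ys;
  k_assoc : forall xs i j, length xs = 2 * n - 1 -> i < n -> j < n ->
              k_assoc_at i xs = k_assoc_at j xs;
  k_distr : forall us i xs z, length us = n -> i < n -> length xs = m ->
              ((exists y, h xs y /\ z = k (replace_at i y us)) <->
               h (map (fun x => k (replace_at i x us)) xs) z);
  k_zero : forall us, length us = n - 1 -> k (zero :: us) = zero;
  k_one : forall u, k (u :: repeat one (n - 1)) = u
}.

Definition endomorphism (theta : H -> H) : Prop :=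
  (forall xs z, length xs = m ->
     ((exists y, h xs y /\ z = theta y) <-> h (map theta xs) z)) /\
  (forall xs, length xs = n -> theta (k xs) = k (map theta xs)) /\
  theta one = one.

Definition subhypergroup (I : H -> Prop) : Prop :=
  (exists x, I x) /\ I zero /\ (forall x, I x -> I (inv x)) /\
  (forall xs z, length xs = m -> Forall I xs -> h xs z -> I z).

Definition hyperideal (I : H -> Prop) : Prop :=
  subhypergroup I /\
  (forall us i, length us = n -> i < n -> I (nth i us zero) -> I (k us)).

Definition proper (I : H -> Prop) : Prop := exists x, ~ I x.

(* kpow l u = k_(l)(u^(l(n-1)+1)) for l >= 1 *)
Fixpoint kpow (l : nat) (u : H) : H :=
  match l with
  | 0 => u
  | S l' => k (kpow l' u :: repeat u (n - 1))
  end.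

Definition rad (E : H -> Prop) : H -> Prop := fun u =>
  (exists r, 1 <= r <= n /\ E (k (repeat u r ++ repeat one (n - r)))) \/
  (exists l, 1 <= l /\ n < l * (n - 1) + 1 /\ E (kpow l u)).

Definition theta_maximal (theta : H -> H) (M : H -> Prop) : Prop :=
  hyperideal M /\ proper M /\
  forall E, hyperideal E -> (forall x, M x -> E x) ->
    (forall x, E x -> M (theta x)) \/ (forall x, E x).

Definition endo_prime (theta : H -> H) (E : H -> Prop) : Prop :=
  hyperideal E /\ proper E /\
  forall us, length us = n -> E (k us) ->
    exists i, i < n /\ (E (nth i us zero) \/ E (theta (k (replace_at i one us)))).

Definition endo_primary (theta : H -> H) (E : H -> Prop) : Prop :=
  hyperideal E /\ proper E /\
  forall us, length us = n -> E (k us) ->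
    exists i, i < n /\ (E (nth i us zero) \/ rad E (theta (k (replace_at i one us)))).

End Hyperring.

(* For a hyperideal P and a in H, the colon ideal {x | k(a, x, 1^(n-2)) in P}
   is a hyperideal containing P, it contains 1 iff a is in P, and it contains
   k(1, u_2^n) whenever k(a, u_2^n) is in P.  For (1), apply the theta-maximality
   of M to the colon of M by u_1: either it is all of H, so u_1 is in M, or theta
   maps it, hence theta(k(1, u_2^n)), into M.  For (2), if u_1 is not in E, Zorn's
   lemma puts the colon of E by u_1 inside a maximal hyperideal M; M is prime, so
   it contains rad E, and the theta-maximality of rad E gives theta(M) in rad E. *)

From Stdlib Require Import List Arith Permutation Lia Classical.
From mathcomp Require boolp classical_sets.
Import ListNotations.

Lemma length_remove_at {A} i (us : list A) :
  i < length us -> length (remove_at i us) = length us - 1.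
Proof. intros Hi; unfold remove_at; rewrite length_app, length_firstn, length_skipn; lia. Qed.

Lemma length_replace_at {A} i (y : A) us :
  i < length us -> length (replace_at i y us) = length us.
Proof.
  intros Hi; unfold replace_at; rewrite length_app, length_firstn; cbn [length].
  rewrite length_skipn; lia.
Qed.

Lemma nth_replace_at {A} i (y : A) us d : i < length us -> nth i (replace_at i y us) d = y.
Proof.
  intros Hi; unfold replace_at; rewrite app_nth2; rewrite length_firstn; [|lia].
  now replace (i - Nat.min i (length us)) with 0 by lia.
Qed.

Lemma Permutation_replace_at {A} i (y : A) us :
  Permutation (replace_at i y us) (y :: remove_at i us).
Proof. apply Permutation_sym, Permutation_middle. Qed.

Lemma Permutation_nth_remove_at {A} i (us : list A) d :
  i < length us -> Permutation us (nth i us d :: remove_at i us).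
Proof.
  revert i; induction us as [|a us IH]; intros [|i] Hi; cbn in Hi |- *; try lia.
  - reflexivity.
  - rewrite perm_swap; apply perm_skip, IH; lia.
Qed.

Definition chain {T} (F : (T -> Prop) -> Prop) : Prop :=
  forall A B, F A -> F B -> (forall x, A x -> B x) \/ (forall x, B x -> A x).

Definition union_of {T} (F : (T -> Prop) -> Prop) : T -> Prop :=
  fun x => exists A, F A /\ A x.

Lemma Forall_union_of_chain {T} (F : (T -> Prop) -> Prop) (xs : list T) :
  (exists A, F A) -> chain F -> Forall (union_of F) xs -> exists A, F A /\ Forall A xs.
Proof.
  intros [A0 FA0] Fchain Hxs; induction Hxs as [|x xs [A [FA Ax]] _ [B [FB HB]]].
  - exists A0; auto.
  - destruct (Fchain A B FA FB) as [AB|BA].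
    + exists B; auto.
    + exists A; split; [assumption|]; constructor; [assumption|].
      eapply Forall_impl; [exact BA|exact HB].
Qed.

(* Zorn_bigcup also needs the union of the empty chain, hence it is applied to
   the family of all A with P (A \/ I). *)
Lemma exists_maximal_extension {T} (P : (T -> Prop) -> Prop) (I : T -> Prop) :
  P I ->
  (forall F, (forall A, F A -> P A) -> (exists A, F A) -> chain F -> P (union_of F)) ->
  exists M, P M /\ (forall x, I x -> M x) /\
    forall N, P N -> (forall x, M x -> N x) -> forall x, N x -> M x.
Proof.
  intros PI Punion.
  destruct (@classical_sets.Zorn_bigcup T (fun A => P (fun x => A x \/ I x)))
    as [A [PA Amax]].
  - intros F FP Fchain.
    destruct (classic (exists A, F A)) as [[A0 FA0]|Fempty].
    + set (G := fun B => exists2 A, F A & B = fun x => A x \/ I x).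
      replace (fun x => _ \/ I x) with (union_of G).
      * apply Punion.
        -- intros B [A FA ->]; exact (FP A FA).
        -- exists (fun x => A0 x \/ I x); now exists A0.
        -- intros B C [A FA ->] [A' FA' ->].
           destruct (Fchain A A' FA FA') as [AA'|A'A]; [left|right];
             intros x [Ax|Ix]; auto.
      * apply boolp.predeqP; intros x; split.
        -- intros [B [[A FA ->] [Ax|Ix]]]; [left; now exists A|now right].
        -- intros [[A FA Ax]|Ix].
           ++ exists (fun x => A x \/ I x); split; [now exists A|now left].
           ++ exists (fun x => A0 x \/ I x); split; [now exists A0|now right].
    + replace (fun x => _ \/ I x) with I; [exact PI|].
      apply boolp.predeqP; intros x; split; [now right|].
      intros [[A FA _]|Ix]; [exfalso; eauto|exact Ix].
  - exists (fun x => A x \/ I x); split; [exact PA|split; [now right|]].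
    intros N PN AN x Nx; apply NNPP; intros nAIx.
    apply (Amax N).
    + split; [intros y Ay; apply AN; now left|].
      intros NA; apply nAIx; left; apply NA, Nx.
    + replace (fun x => N x \/ I x) with N; [exact PN|].
      apply boolp.predeqP; intros y; split; [now left|].
      intros [Ny|Iy]; [exact Ny|apply AN; now right].
Qed.

Section Hyperring.
Variables (H : Type) (m n : nat) (h : list H -> H -> Prop) (k : list H -> H)
  (zero one : H) (inv : H -> H).
Hypothesis KH : KrasnerHyperring m n h k zero one inv.

Local Notation ideal := (hyperideal m n h k zero inv).

Let m_ge2 : 2 <= m := kh_m KH.
Let n_ge2 : 2 <= n := kh_n KH.

Lemma k_replace_at i y us : length us = n -> i < n ->
  k (replace_at i y us) = k (y :: remove_at i us).
Proof.
  intros L Hi; apply (k_comm KH); [rewrite length_replace_at; lia|].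
  apply Permutation_replace_at.
Qed.

Lemma k_nth_remove_at i us : length us = n -> i < n ->
  k us = k (nth i us zero :: remove_at i us).
Proof. intros L Hi; apply (k_comm KH), Permutation_nth_remove_at; lia. Qed.

(* Associativity read at positions 0 and n-1 of the word ps ++ a :: bs. *)
Lemma k_swap_tails a ps bs : length ps = n - 1 -> length bs = n - 1 ->
  k (k (a :: ps) :: bs) = k (k (a :: bs) :: ps).
Proof.
  intros La Lb; set (xs := ps ++ a :: bs).
  assert (Lx : length xs = 2 * n - 1) by (unfold xs; rewrite length_app; cbn; lia).
  pose proof (k_assoc KH xs (i := 0) (j := n - 1) Lx ltac:(lia) ltac:(lia)) as E.
  unfold k_assoc_at in E; cbn in E.
  assert (Fn : firstn n xs = ps ++ [a]).
  { unfold xs; replace n with (length ps + 1) by lia.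
    rewrite firstn_app, firstn_all2 by lia.
    now replace (length ps + 1 - length ps) with 1 by lia. }
  assert (Sn : skipn n xs = bs).
  { unfold xs; replace n with (length ps + 1) by lia.
    rewrite skipn_app, skipn_all2 by lia.
    now replace (length ps + 1 - length ps) with 1 by lia. }
  assert (Fn1 : firstn (n - 1) xs = ps).
  { unfold xs; rewrite <- La, firstn_app, firstn_all, Nat.sub_diag; apply app_nil_r. }
  assert (Sn1 : skipn (n - 1) xs = a :: bs).
  { unfold xs; rewrite <- La, skipn_app, skipn_all, Nat.sub_diag; reflexivity. }
  rewrite Fn, Sn, Fn1, Sn1, (skipn_all2 (n := n - 1 + n)), firstn_all2 in E
    by (try unfold xs; rewrite ?length_app; cbn; lia).
  rewrite (k_comm KH (xs := a :: ps) (ys := ps ++ [a])), E.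
  - apply (k_comm KH); [rewrite length_app; cbn; lia|].
    rewrite ?app_nil_r; apply Permutation_sym, Permutation_cons_append.
  - cbn; lia.
  - apply Permutation_cons_append.
Qed.

Lemma k_replace_zero i us : length us = n -> i < n -> k (replace_at i zero us) = zero.
Proof.
  intros L Hi; rewrite k_replace_at by assumption.
  apply (k_zero KH); rewrite length_remove_at; lia.
Qed.

Lemma k_replace_inv i us x : length us = n -> i < n ->
  k (replace_at i (inv x) us) = inv (k (replace_at i x us)).
Proof.
  intros L Hi; set (f := fun y => k (replace_at i y us)).
  apply (h_inv_unique KH).
  assert (Hf : h (map f (x :: inv x :: repeat zero (m - 2))) zero).
  { apply (k_distr KH); [assumption|assumption|cbn; rewrite repeat_length; lia|].
    exists zero; split; [apply (h_inv KH)|].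
    symmetry; apply k_replace_zero; assumption. }
  cbn in Hf; rewrite map_repeat in Hf.
  now replace (f zero) with zero in Hf by (symmetry; apply k_replace_zero; assumption).
Qed.

Lemma hyperideal_k_replace P i us x : ideal P -> length us = n -> i < n -> P x ->
  P (k (replace_at i x us)).
Proof.
  intros [_ HP] L Hi Px; apply (HP _ i); [rewrite length_replace_at; lia|lia|].
  rewrite nth_replace_at; [assumption|lia].
Qed.

Lemma hyperideal_preimage_k_replace P i us : ideal P -> length us = n -> i < n ->
  ideal (fun x => P (k (replace_at i x us))).
Proof.
  intros HP L Hi; pose proof HP as [[_ [P0 [Pinv Ph]]] Pk].
  split; [split; [|split; [|split]]|].
  - exists zero; rewrite k_replace_zero; assumption.
  - rewrite k_replace_zero; assumption.
  - intros x Px; rewrite k_replace_inv; auto.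
  - intros xs z Lx Fx Hz.
    apply (Ph (map (fun y => k (replace_at i y us)) xs)).
    + rewrite length_map; assumption.
    + apply Forall_map; assumption.
    + apply (k_distr KH); eauto.
  - intros ys j Ly Hj Py.
    assert (Lys : length (remove_at j ys) = n - 1) by (rewrite length_remove_at; lia).
    assert (Lus : length (remove_at i us) = n - 1) by (rewrite length_remove_at; lia).
    rewrite k_replace_at, (k_nth_remove_at j ys), k_swap_tails by assumption.
    apply (Pk _ 0); cbn; try lia.
    rewrite <- k_replace_at; assumption.
Qed.

Definition colon (P : H -> Prop) (a : H) : H -> Prop :=
  fun x => P (k (a :: x :: repeat one (n - 2))).

Lemma hyperideal_colon P a : ideal P -> ideal (colon P a).
Proof.
  intros HP; apply (hyperideal_preimage_k_replace P 1 (a :: one :: repeat one (n - 2)) HP);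
    [cbn; rewrite repeat_length|]; lia.
Qed.

Lemma subset_colon P a x : ideal P -> P x -> colon P a x.
Proof.
  intros HP; apply (hyperideal_k_replace P 1 (a :: one :: repeat one (n - 2)) x HP);
    [cbn; rewrite repeat_length|]; lia.
Qed.

Lemma k_one_tail u : k (u :: one :: repeat one (n - 2)) = u.
Proof. rewrite <- (k_one KH u) at 2; now replace (n - 1) with (S (n - 2)) by lia. Qed.

Lemma k_ones : k (repeat one n) = one.
Proof. rewrite <- (k_one KH one) at 2; now replace n with (S (n - 1)) at 1 by lia. Qed.

Lemma colon_one P a : colon P a one = P a.
Proof. unfold colon; now rewrite k_one_tail. Qed.

Lemma colon_k_one P a rest : length rest = n - 1 ->
  colon P a (k (one :: rest)) <-> P (k (a :: rest)).
Proof.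
  intros Lr; unfold colon.
  assert (Lt : length (a :: repeat one (n - 2)) = n - 1) by (cbn; rewrite repeat_length; lia).
  rewrite (k_comm KH (ys := k (one :: rest) :: a :: repeat one (n - 2))), k_swap_tails,
    (k_comm KH (xs := one :: a :: _) (ys := a :: one :: repeat one (n - 2))), k_one_tail;
    try reflexivity; try apply perm_swap; cbn; rewrite ?repeat_length; lia.
Qed.

Lemma theta_maximal_endo_prime theta M :
  theta_maximal m n h k zero inv theta M -> endo_prime m n h k zero one inv theta M.
Proof.
  intros [IM [PM Mmax]]; split; [exact IM|split; [exact PM|]].
  intros [|a rest] L Ha; cbn in L; [lia|].
  exists 0; split; [lia|]; cbn.
  destruct (Mmax (colon M a) (hyperideal_colon M a IM) (fun x => subset_colon M a x IM))
    as [Hth|Hall].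
  - right; apply Hth, colon_k_one; [lia|assumption].
  - left; rewrite <- colon_one; apply Hall.
Qed.

Definition maximal_hyperideal (M : H -> Prop) : Prop :=
  ideal M /\ ~ M one /\
  forall N, ideal N -> ~ N one -> (forall x, M x -> N x) -> forall x, N x -> M x.

Lemma hyperideal_union_of_chain F :
  (forall A, F A -> ideal A /\ ~ A one) -> (exists A, F A) -> chain F ->
  ideal (union_of F) /\ ~ union_of F one.
Proof.
  intros HF [A0 FA0] Fchain.
  assert (Fzero : union_of F zero).
  { exists A0; split; [assumption|]; apply (HF A0 FA0). }
  split; [split; [split; [|split; [|split]]|]|].
  - now exists zero.
  - exact Fzero.
  - intros x [A [FA Ax]]; exists A; split; [assumption|]; now apply (HF A FA).
  - intros xs z Lx Fx Hz.
    destruct (Forall_union_of_chain F xs (ex_intro _ A0 FA0) Fchain Fx) as [A [FA HA]].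
    exists A; split; [assumption|]; eapply (HF A FA); eauto.
  - intros us i L Hi [A [FA Ax]]; exists A; split; [assumption|]; eapply (HF A FA); eauto.
  - intros [A [FA A1]]; now apply (HF A FA).
Qed.

Lemma exists_maximal_hyperideal Q : ideal Q -> ~ Q one ->
  exists M, maximal_hyperideal M /\ forall x, Q x -> M x.
Proof.
  intros IQ Q1.
  destruct (exists_maximal_extension (fun N => ideal N /\ ~ N one) Q (conj IQ Q1)
              hyperideal_union_of_chain) as [M [[IM M1] [QM Mmax]]].
  exists M; split; [split; [exact IM|split; [exact M1|]]|exact QM].
  intros N IN N1; now apply Mmax.
Qed.

Section MaximalHyperideal.
Variable M : H -> Prop.
Hypothesis HM : maximal_hyperideal M.

Lemma maximal_hyperideal_k_cons a rest : length rest = n - 1 ->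
  M (k (a :: rest)) -> M a \/ M (k (one :: rest)).
Proof.
  intros Lr Ha; destruct HM as [IM [M1 Mmax]].
  destruct (classic (M a)) as [Ma|Ma]; [now left|right].
  apply (Mmax (colon M a) (hyperideal_colon M a IM)).
  - now rewrite colon_one.
  - intros x; now apply subset_colon.
  - now apply colon_k_one.
Qed.

Lemma maximal_hyperideal_k_powers x r : r <= n ->
  M (k (repeat x r ++ repeat one (n - r))) -> M x.
Proof.
  induction r as [|r IH]; intros Hr Hx.
  - exfalso; apply (proj1 (proj2 HM)); rewrite <- k_ones.
    now rewrite Nat.sub_0_r in Hx.
  - destruct (maximal_hyperideal_k_cons x (repeat x r ++ repeat one (n - S r)))
      as [Mx|M1]; [rewrite length_app, !repeat_length; lia|exact Hx|exact Mx|].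
    apply IH; [lia|].
    rewrite (k_comm KH (ys := one :: repeat x r ++ repeat one (n - S r)));
      [exact M1|rewrite length_app, !repeat_length; lia|].
    replace (n - r) with (S (n - S r)) by lia.
    apply Permutation_sym, Permutation_middle.
Qed.

Lemma maximal_hyperideal_kpow x l : M (kpow n k l x) -> M x.
Proof.
  induction l as [|l IH]; cbn; [trivial|intros Hx].
  destruct (maximal_hyperideal_k_cons (kpow n k l x) (repeat x (n - 1)))
    as [Ml|M1]; [apply repeat_length|exact Hx|now apply IH|].
  apply (maximal_hyperideal_k_powers x (n - 1)); [lia|].
  rewrite (k_comm KH (ys := one :: repeat x (n - 1)));
    [exact M1|rewrite length_app, !repeat_length; lia|].
  replace (n - (n - 1)) with 1 by lia.
  rewrite Permutation_app_comm; reflexivity.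
Qed.

Lemma rad_sub_maximal_hyperideal E : (forall x, E x -> M x) ->
  forall x, rad n k one E x -> M x.
Proof.
  intros EM x [[r [Hr Er]]|[l [_ [_ El]]]].
  - apply (maximal_hyperideal_k_powers x r); [lia|auto].
  - apply (maximal_hyperideal_kpow x l); auto.
Qed.

End MaximalHyperideal.

Lemma rad_theta_maximal_endo_primary theta E : ideal E ->
  theta_maximal m n h k zero inv theta (rad n k one E) ->
  endo_primary m n h k zero one inv theta E.
Proof.
  intros IE [_ [[x0 Rx0] Rmax]].
  assert (ER : forall x, E x -> rad n k one E x).
  { intros x Ex; left; exists 1; split; [lia|]; cbn; now rewrite (k_one KH). }
  split; [exact IE|split; [exists x0; intros Ex0; now apply Rx0, ER|]].
  intros [|a rest] L Ha; cbn in L; [lia|].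
  exists 0; split; [lia|]; cbn.
  destruct (classic (E a)) as [Ea|Ea]; [now left|right].
  destruct (exists_maximal_hyperideal (colon E a) (hyperideal_colon E a IE)) as [M [HM QM]].
  { now rewrite colon_one. }
  assert (RM : forall x, rad n k one E x -> M x).
  { apply (rad_sub_maximal_hyperideal M HM); intros x Ex; now apply QM, subset_colon. }
  destruct HM as [IM [M1 _]].
  destruct (Rmax M IM RM) as [Hth|Hall].
  - now apply Hth, QM, colon_k_one; [lia|].
  - now exfalso; apply M1, Hall.
Qed.

End Hyperring.

Theorem mainTheorem20 (H : Type) (m n : nat) (h : list H -> H -> Prop) (k : list H -> H)
  (zero one : H) (inv : H -> H) (theta : H -> H) :
  KrasnerHyperring m n h k zero one inv ->
  endomorphism m n h k one theta ->
  (forall M : H -> Prop, theta_maximal m n h k zero inv theta M ->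
     endo_prime m n h k zero one inv theta M) /\
  (forall E : H -> Prop, hyperideal m n h k zero inv E ->
     theta_maximal m n h k zero inv theta (rad n k one E) ->
     endo_primary m n h k zero one inv theta E).
Proof.
  intros KH _; split; [apply theta_maximal_endo_prime|apply rad_theta_maximal_endo_primary];
    exact KH.
Qed.
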